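(* Let $R$ be a semiring, $i:M\to N$ a normal monomorphism of $R$-modules (identify $M$ with the saturated submodule $i(M)$ of $N$), and $L$ a saturated submodule of $M$. Then $L$ is a saturated submodule of $N$; the projections $\pi:M\to M/L$ and $\pi':N\to N/L$ are normal epimorphisms; the induced map $i':M/L\to N/L$, $[m]\mapsto[i(m)]$, is a well-defined normal monomorphism; and the commutative square with top $i$, left $\pi$, right $\pi'$, bottom $i'$ is both a pullback and a pushout in $\mathrm{Mod}_R$.
   Context: Semirings are commutative with $0,1$; an $R$-module is a commutative monoid with $R$-action. A submodule $N$ of $M$ is saturated if $x+y\in N$ and $y\in N$ imply $x\in N$. For a submodule $K\subseteq M$, $M/K$ is the set of classes of the congruence $x\sim y\iff x+k=y+k'$ for some $k,k'\in K$. A morphism is a normal monomorphism (resp. normal epimorphism) if it is the equalizer (resp. coequalizer) of some morphism and the zero map. *)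

From HB Require Import structures.
From mathcomp Require Import all_boot all_order all_algebra.
From Stdlib Require Import ClassicalEpsilon FunctionalExtensionality
  PropExtensionality ProofIrrelevance.
From mathcomp Require Import boolp.

Set Implicit Arguments.
Unset Strict Implicit.
Unset Printing Implicit Defensive.
Import GRing.Theory.
Local Open Scope ring_scope.

Section Submodules.
Variable R : comPzSemiRingType.
Variable M : lSemiModType R.

Record submod := Submod {
  sm_set :> M -> Prop;
  sm0 : sm_set 0;
  smD : forall x y, sm_set x -> sm_set y -> sm_set (x + y);
  smZ : forall (r : R) x, sm_set x -> sm_set (r *: x) }.

Definition saturated (N : M -> Prop) : Prop :=
  forall x y, N (x + y) -> N y -> N x.

Definition saturated_submodule (N : M -> Prop) : Prop :=
  [/\ N 0, (forall x y, N x -> N y -> N (x + y)),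
      (forall (r : R) x, N x -> N (r *: x)) & saturated N].

Variable K : submod.

Definition kcongr (x y : M) : Prop :=
  exists k k', [/\ K k, K k' & x + k = y + k'].

Lemma kcongr_refl x : kcongr x x.
Proof. by exists 0, 0; split => //; apply: sm0. Qed.

Lemma kcongr_sym x y : kcongr x y -> kcongr y x.
Proof. by move=> [k [k' [? ? e]]]; exists k', k; split. Qed.

Lemma kcongr_trans x y z : kcongr x y -> kcongr y z -> kcongr x z.
Proof.
move=> [k1 [k1' [K1 K1' e1]]] [k2 [k2' [K2 K2' e2]]].
exists (k1 + k2), (k2' + k1'); split; try by apply: smD.
by rewrite addrA e1 -addrA [k1' + _]addrC addrA e2 -addrA.
Qed.

Lemma kcongrD x x' y y' : kcongr x x' -> kcongr y y' -> kcongr (x + y) (x' + y').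
Proof.
move=> [k1 [k1' [K1 K1' e1]]] [k2 [k2' [K2 K2' e2]]].
exists (k1 + k2), (k1' + k2'); split; try by apply: smD.
rewrite addrACA e1 e2; by rewrite addrACA.
Qed.

Lemma kcongrZ (r : R) x y : kcongr x y -> kcongr (r *: x) (r *: y).
Proof.
move=> [k [k' [Kk Kk' e]]]; exists (r *: k), (r *: k'); split; try by apply: smZ.
by rewrite -!scalerDr e.
Qed.

Definition kclass (x : M) : M -> Prop := kcongr x.

Definition quot := {A : M -> Prop | exists x, A = kclass x}.

HB.instance Definition _ := gen_eqMixin quot.
HB.instance Definition _ := gen_choiceMixin quot.

Definition qproj (x : M) : quot := exist _ (kclass x) (ex_intro _ x erefl).

Lemma qproj_eq x y : qproj x = qproj y <-> kcongr x y.
Proof.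
split.
- move=> /(f_equal (@proj1_sig _ _)) /= e.
  have : kclass y y by apply: kcongr_refl.
  by rewrite -e.
- move=> h; apply: eq_sig_hprop => /=; first by move=> ? ? ?; apply: proof_irrelevance.
  apply: functional_extensionality => z; apply: propositional_extensionality.
  split => hz; first by apply: kcongr_trans (kcongr_sym h) hz.
  exact: kcongr_trans h hz.
Qed.

Definition qrep (q : quot) : M :=
  proj1_sig (cid (proj2_sig q)).

Lemma qrepK q : qproj (qrep q) = q.
Proof.
rewrite /qrep; case: cid => x e.
case: q e => A hA /= e; apply: eq_sig_hprop => /=;
  last by rewrite e.
by move=> ? ? ?; apply: proof_irrelevance.
Qed.

Lemma qproj_rep x : kcongr (qrep (qproj x)) x.
Proof. by apply/qproj_eq; rewrite qrepK. Qed.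

Lemma quot_ind (P : quot -> Prop) : (forall x, P (qproj x)) -> forall q, P q.
Proof. by move=> h q; rewrite -(qrepK q). Qed.

Definition qzero : quot := qproj 0.
Definition qadd (a b : quot) : quot := qproj (qrep a + qrep b).
Definition qscale (r : R) (a : quot) : quot := qproj (r *: qrep a).

Lemma qaddE x y : qadd (qproj x) (qproj y) = qproj (x + y).
Proof. by apply/qproj_eq; apply: kcongrD; apply: qproj_rep. Qed.

Lemma qscaleE r x : qscale r (qproj x) = qproj (r *: x).
Proof. by apply/qproj_eq; apply: kcongrZ; apply: qproj_rep. Qed.

Lemma qaddA : associative qadd.
Proof.
elim/quot_ind => x; elim/quot_ind => y; elim/quot_ind => z.
by rewrite !qaddE addrA.
Qed.

Lemma qaddC : commutative qadd.
Proof. by elim/quot_ind => x; elim/quot_ind => y; rewrite !qaddE addrC. Qed.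

Lemma qadd0 : left_id qzero qadd.
Proof. by elim/quot_ind => x; rewrite /qzero qaddE add0r. Qed.

HB.instance Definition _ := GRing.isNmodule.Build quot qaddA qaddC qadd0.

Lemma qaddE' x y : qproj x + qproj y = qproj (x + y).
Proof. exact: qaddE. Qed.

Lemma qscaleA a b v : qscale a (qscale b v) = qscale (a * b) v.
Proof. by elim/quot_ind: v => x; rewrite !qscaleE scalerA. Qed.

Lemma qscale0 v : qscale 0 v = 0.
Proof. by elim/quot_ind: v => x; rewrite qscaleE scale0r. Qed.

Lemma qscale1 : left_id 1 qscale.
Proof. by elim/quot_ind => x; rewrite qscaleE scale1r. Qed.

Lemma qscaleDr : right_distributive qscale +%R.
Proof.
move=> r; elim/quot_ind => x; elim/quot_ind => y.
by rewrite qaddE' !qscaleE qaddE' scalerDr.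
Qed.

Lemma qscaleDl v : {morph qscale^~ v : a b / a + b}.
Proof.
elim/quot_ind: v => x a b.
by rewrite !qscaleE qaddE' scalerDl.
Qed.

HB.instance Definition _ := GRing.Nmodule_isLSemiModule.Build R quot
  qscaleA qscale0 qscale1 qscaleDr qscaleDl.

Lemma qproj_semilinear : semilinear_for *:%R qproj.
Proof.
split; first by move=> r x; rewrite -qscaleE.
by move=> x y; rewrite -qaddE'.
Qed.

HB.instance Definition _ :=
  GRing.isSemilinear.Build R M quot *:%R qproj qproj_semilinear.

End Submodules.

Arguments quot {R M} K.
Arguments qproj {R M} K.

Section Image.
Variables (R : comPzSemiRingType) (M N : lSemiModType R) (f : {linear M -> N}).
Variable L : submod M.

Definition image_set (y : N) : Prop := exists2 x, L x & y = f x.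

Lemma image0 : image_set 0.
Proof. by exists 0; [apply: sm0 | rewrite linear0]. Qed.

Lemma imageD x y : image_set x -> image_set y -> image_set (x + y).
Proof.
by move=> [a La ->] [b Lb ->]; exists (a + b); [apply: smD | rewrite linearD].
Qed.

Lemma imageZ (r : R) x : image_set x -> image_set (r *: x).
Proof. by move=> [a La ->]; exists (r *: a); [apply: smZ | rewrite linearZ]. Qed.

Definition image_submod : submod N := Submod image0 imageD imageZ.
End Image.

Section Category.
Variable R : comPzSemiRingType.

Definition is_equalizer_with_zero (A B C : lSemiModType R)
  (f : {linear A -> B}) (g : {linear B -> C}) : Prop :=
  (forall a, g (f a) = 0) /\
  (forall (D : lSemiModType R) (h : {linear D -> B}),
     (forall d, g (h d) = 0) ->
     (exists u : {linear D -> A}, forall d, f (u d) = h d) /\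
     (forall u v : {linear D -> A},
        (forall d, f (u d) = h d) -> (forall d, f (v d) = h d) -> u =1 v)).

Definition is_coequalizer_with_zero (A B C : lSemiModType R)
  (g : {linear A -> B}) (f : {linear B -> C}) : Prop :=
  (forall a, f (g a) = 0) /\
  (forall (D : lSemiModType R) (h : {linear B -> D}),
     (forall a, h (g a) = 0) ->
     (exists u : {linear C -> D}, forall b, u (f b) = h b) /\
     (forall u v : {linear C -> D},
        (forall b, u (f b) = h b) -> (forall b, v (f b) = h b) -> u =1 v)).

Definition normal_mono (A B : lSemiModType R) (f : {linear A -> B}) : Prop :=
  exists (C : lSemiModType R) (g : {linear B -> C}), is_equalizer_with_zero f g.

Definition normal_epi (B C : lSemiModType R) (f : {linear B -> C}) : Prop :=
  exists (A : lSemiModType R) (g : {linear A -> B}), is_coequalizer_with_zero g f.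

(** Commutative square   P --p1--> X
                          |         |
                          p2        f
                          v         v
                          Y ---g--> Z        *)
Definition is_pullback (P X Y Z : lSemiModType R)
  (p1 : {linear P -> X}) (p2 : {linear P -> Y})
  (f : {linear X -> Z}) (g : {linear Y -> Z}) : Prop :=
  (forall x, f (p1 x) = g (p2 x)) /\
  (forall (D : lSemiModType R) (a : {linear D -> X}) (b : {linear D -> Y}),
     (forall d, f (a d) = g (b d)) ->
     (exists u : {linear D -> P}, forall d, p1 (u d) = a d /\ p2 (u d) = b d) /\
     (forall u v : {linear D -> P},
        (forall d, p1 (u d) = a d /\ p2 (u d) = b d) ->
        (forall d, p1 (v d) = a d /\ p2 (v d) = b d) -> u =1 v)).

Definition is_pushout (P X Y Z : lSemiModType R)
  (p1 : {linear P -> X}) (p2 : {linear P -> Y})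
  (f : {linear X -> Z}) (g : {linear Y -> Z}) : Prop :=
  (forall x, f (p1 x) = g (p2 x)) /\
  (forall (D : lSemiModType R) (a : {linear X -> D}) (b : {linear Y -> D}),
     (forall x, a (p1 x) = b (p2 x)) ->
     (exists u : {linear Z -> D}, forall x y, u (f x) = a x /\ u (g y) = b y) /\
     (forall u v : {linear Z -> D},
        (forall x y, u (f x) = a x /\ u (g y) = b y) ->
        (forall x y, v (f x) = a x /\ v (g y) = b y) -> u =1 v)).
End Category.

From HB Require Import structures.
From mathcomp Require Import all_boot all_order all_algebra.
From mathcomp Require Import boolp.
Set Implicit Arguments.
Unset Strict Implicit.
Unset Printing Implicit Defensive.
Import GRing.Theory.
Local Open Scope ring_scope.

(* Let i be the kernel of g : N -> C. Since ker g is saturated and i is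
   injective, i(L) is saturated in N. The map i' : M/L -> N/L is injective
   because i(L) consists of images of elements of L, and the map N/L -> C
   induced by g has kernel exactly the image of i', so i' is again a kernel.
   The square is a pullback since an element of N whose class lies in the
   image of i' is killed by g and therefore comes from M; it is a pushout
   since a map out of N agreeing on i(M) with a map out of M/L vanishes on
   i(L), hence factors through N/L. *)

Section LinearMaps.
Variable R : comPzSemiRingType.

Definition linear_of (A B : lSemiModType R) (f : A -> B)
  (f_lin : GRing.semilinear_for *:%R f) : {linear A -> B} :=
  HB.pack f (GRing.isSemilinear.Build R A B *:%R f f_lin).

Lemma scale_line_semilinear (B : lSemiModType R) (b : B) :
  GRing.semilinear_for *:%R (fun r : R^o => r *: b).
Proof. by split=> [r s | r s] /=; rewrite ?scalerA ?scalerDl. Qed.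

Definition scale_line (B : lSemiModType R) (b : B) : {linear R^o -> B} :=
  linear_of (scale_line_semilinear b).

Lemma inj_linear_factor (D A B : lSemiModType R) (f : {linear A -> B})
    (h : {linear D -> B}) :
  injective f -> (forall d, exists a, f a = h d) ->
  exists u : {linear D -> A}, forall d, f (u d) = h d.
Proof.
move=> f_inj h_range.
have h_range' d : exists a, f a == h d by have [a /eqP] := h_range d; exists a.
pose u d := xchoose (h_range' d).
have fu d : f (u d) = h d by apply/eqP/(xchooseP (h_range' d)).
have u_lin : GRing.semilinear_for *:%R u.
  by split=> [r d | d e]; apply: f_inj; rewrite ?linearZ ?linearD /= !fu
    ?linearZ ?linearD.
by exists (linear_of u_lin).
Qed.

Section Equalizer.
Variables (A B C : lSemiModType R) (f : {linear A -> B}) (g : {linear B -> C}).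

(* Test the universal property on the lines through the points of B. *)
Lemma equalizer_with_zero_inj : is_equalizer_with_zero f g -> injective f.
Proof.
move=> [gf0 univ] a a' faa'.
have g_line d : g (scale_line (f a) d) = 0 by rewrite /= linearZ /= gf0 scaler0.
have [_ /(_ (scale_line a) (scale_line a'))] := univ _ _ g_line.
by move/(_ _ _ 1); rewrite /= !scale1r; apply=> d /=; rewrite linearZ ?faa'.
Qed.

Lemma equalizer_with_zero_ker b :
  is_equalizer_with_zero f g -> g b = 0 -> exists a, f a = b.
Proof.
move=> [_ univ] gb0.
have g_line d : g (scale_line b d) = 0 by rewrite /= linearZ /= gb0 scaler0.
have [[u fu] _] := univ _ _ g_line.
by exists (u 1); rewrite fu /= scale1r.
Qed.

Lemma kernel_equalizer_with_zero :
  injective f -> (forall a, g (f a) = 0) ->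
  (forall b, g b = 0 -> exists a, f a = b) -> is_equalizer_with_zero f g.
Proof.
move=> f_inj gf0 ker_g; split=> // D h gh0; split.
  by apply: inj_linear_factor => // d; apply: ker_g.
by move=> u v fu fv d; apply: f_inj; rewrite fu fv.
Qed.

End Equalizer.
End LinearMaps.

Section QuotientLift.
Variables (R : comPzSemiRingType) (M D : lSemiModType R) (K : submod M).

Lemma qproj_submod0 k : K k -> qproj K k = 0.
Proof.
move=> Kk; rewrite -(linear0 (qproj K)); apply/qproj_eq.
by exists 0, k; split; rewrite ?addr0 ?add0r //; apply: sm0.
Qed.

Lemma eq_on_qproj (u v : quot K -> D) :
  (forall x, u (qproj K x) = v (qproj K x)) -> u =1 v.
Proof. by move=> uv; elim/quot_ind. Qed.

Variables (h : {linear M -> D}) (hK : forall k, K k -> h k = 0).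

Lemma kcongr_eq x y : kcongr K x y -> h x = h y.
Proof.
move=> [k [k' [Kk Kk' /(congr1 h)]]].
by rewrite !linearD (hK Kk) (hK Kk') !addr0.
Qed.

Let qlift_fun (q : quot K) : D := h (qrep q).

Let qlift_funE x : qlift_fun (qproj K x) = h x.
Proof. exact/kcongr_eq/qproj_rep. Qed.

Lemma qlift_semilinear : GRing.semilinear_for *:%R qlift_fun.
Proof.
split=> [r | ]; elim/quot_ind=> x; first by rewrite -linearZ /= !qlift_funE linearZ.
by elim/quot_ind=> y; rewrite -linearD /= !qlift_funE linearD.
Qed.

Definition qlift : {linear quot K -> D} := linear_of qlift_semilinear.

Lemma qliftE x : qlift (qproj K x) = h x.
Proof. exact: qlift_funE. Qed.

End QuotientLift.

Section SubmoduleType.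
Variables (R : comPzSemiRingType) (M : lSemiModType R) (K : submod M).

Definition submod_type := {x : M | K x}.
HB.instance Definition _ := gen_eqMixin submod_type.
HB.instance Definition _ := gen_choiceMixin submod_type.

Lemma submod_type_eq (a b : submod_type) : sval a = sval b -> a = b.
Proof. by move=> e; apply: eq_sig_hprop => // x p q; apply: Prop_irrelevance. Qed.

Let szero : submod_type := exist _ 0 (sm0 K).
Let sadd (a b : submod_type) : submod_type :=
  exist _ (sval a + sval b) (smD (svalP a) (svalP b)).
Let sscale (r : R) (a : submod_type) : submod_type :=
  exist _ (r *: sval a) (smZ r (svalP a)).

Let saddA : associative sadd.
Proof. by move=> a b c; apply: submod_type_eq; rewrite /= addrA. Qed.
Let saddC : commutative sadd.
Proof. by move=> a b; apply: submod_type_eq; rewrite /= addrC. Qed.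
Let sadd0 : left_id szero sadd.
Proof. by move=> a; apply: submod_type_eq; rewrite /= add0r. Qed.
HB.instance Definition _ := GRing.isNmodule.Build submod_type saddA saddC sadd0.

Let sscaleA a b v : sscale a (sscale b v) = sscale (a * b) v.
Proof. by apply: submod_type_eq; rewrite /= scalerA. Qed.
Let sscale0 v : sscale 0 v = 0.
Proof. by apply: submod_type_eq; rewrite /= scale0r. Qed.
Let sscale1 : left_id 1 sscale.
Proof. by move=> v; apply: submod_type_eq; rewrite /= scale1r. Qed.
Let sscaleDr : right_distributive sscale +%R.
Proof. by move=> r a b; apply: submod_type_eq; rewrite /= scalerDr. Qed.
Let sscaleDl v : {morph sscale^~ v : a b / a + b}.
Proof. by move=> a b; apply: submod_type_eq; rewrite /= scalerDl. Qed.
HB.instance Definition _ := GRing.Nmodule_isLSemiModule.Build R submod_type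
  sscaleA sscale0 sscale1 sscaleDr sscaleDl.

Lemma sval_semilinear : GRing.semilinear_for *:%R (sval : submod_type -> M).
Proof. by []. Qed.

Definition submod_incl : {linear submod_type -> M} := linear_of sval_semilinear.

Lemma qproj_coequalizer : is_coequalizer_with_zero submod_incl (qproj K).
Proof.
split=> [[k Kk] | D h h0]; first exact: qproj_submod0.
have hK k : K k -> h k = 0 by move=> Kk; apply: (h0 (exist _ k Kk)).
split; first by exists (qlift hK) => x; rewrite qliftE.
by move=> u v hu hv; apply: eq_on_qproj => x; rewrite hu hv.
Qed.

Lemma qproj_normal_epi : normal_epi (qproj K).
Proof. by exists submod_type, submod_incl; apply: qproj_coequalizer. Qed.

End SubmoduleType.

Section QuotientMap.
Variables (R : comPzSemiRingType) (M N : lSemiModType R).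
Variables (f : {linear M -> N}) (K : submod M).

Local Notation fK := (image_submod f K).

Lemma qproj_image0 k : K k -> (qproj fK \o f) k = 0.
Proof. by move=> Kk; apply: qproj_submod0; exists k. Qed.

Definition qmap : {linear quot K -> quot fK} := qlift qproj_image0.

Lemma qmapE m : qmap (qproj K m) = qproj fK (f m).
Proof. exact: qliftE. Qed.

Lemma qmap_inj : injective f -> injective qmap.
Proof.
move=> f_inj; elim/quot_ind=> x; elim/quot_ind=> y; rewrite !qmapE.
move=> /qproj_eq [_ [_ [[k Kk ->] [k' Kk' ->] e]]]; apply/qproj_eq.
by exists k, k'; split=> //; apply: f_inj; rewrite !linearD.
Qed.

Lemma qmap_pushout : is_pushout f (qproj K) (qproj fK) qmap.
Proof.
split=> [m | D a b ab]; first by rewrite qmapE.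
have afK n : fK n -> a n = 0.
  by move=> [k Kk ->]; rewrite ab -(linear0 b); congr (b _); apply: qproj_submod0.
split; first by exists (qlift afK) => n; elim/quot_ind=> m; rewrite qmapE !qliftE.
move=> u v hu hv; apply: eq_on_qproj => n.
by rewrite (proj1 (hu n 0)) (proj1 (hv n 0)).
Qed.

Variables (C : lSemiModType R) (g : {linear N -> C}).
Hypothesis fg : is_equalizer_with_zero f g.

Let f_inj : injective f := equalizer_with_zero_inj fg.
Let gf0 : forall m, g (f m) = 0 := fg.1.

Lemma image_saturated_submodule :
  saturated K -> saturated_submodule (image_set f K).
Proof.
move=> satK; split; [exact: image0 | exact: imageD | exact: imageZ |].
move=> x y [a Ka exy] [b Kb eyb]; subst y.
have [m fm] : exists m, f m = x.
  apply: (equalizer_with_zero_ker fg).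
  by move/(congr1 g): exy; rewrite linearD !gf0 addr0.
have fmb : f (m + b) = f a by rewrite linearD fm.
by exists m => //; apply: (satK m b) => //; rewrite (f_inj fmb).
Qed.

Lemma g_image0 n : fK n -> g n = 0.
Proof. by move=> [k _ ->]; apply: gf0. Qed.

Local Notation g' := (qlift g_image0).

Lemma g'_qmap q : g' (qmap q) = 0.
Proof. by elim/quot_ind: q => m; rewrite qmapE qliftE gf0. Qed.

Lemma g'_ker_range n : g' (qproj fK n) = 0 -> exists m, f m = n.
Proof. by rewrite qliftE; apply: equalizer_with_zero_ker. Qed.

Lemma qmap_equalizer_with_zero : is_equalizer_with_zero qmap g'.
Proof.
apply: kernel_equalizer_with_zero; [exact: qmap_inj | exact: g'_qmap |].
elim/quot_ind=> n /g'_ker_range [m <-].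
by exists (qproj K m); rewrite qmapE.
Qed.

Lemma qmap_normal_mono : normal_mono qmap.
Proof. by exists C, g'; apply: qmap_equalizer_with_zero. Qed.

Lemma qmap_pullback : is_pullback f (qproj K) (qproj fK) qmap.
Proof.
split=> [m | D a b ab]; first by rewrite qmapE.
split; last first.
  by move=> u v hu hv d; apply: f_inj; rewrite (proj1 (hu d)) (proj1 (hv d)).
have [u fu] : exists u : {linear D -> M}, forall d, f (u d) = a d.
  apply: inj_linear_factor => // d; apply: g'_ker_range.
  by rewrite ab g'_qmap.
exists u => d; split=> //.
by apply: (qmap_inj f_inj); rewrite qmapE fu ab.
Qed.

End QuotientMap.

Theorem mainTheorem12 (R : comPzSemiRingType) (M N : lSemiModType R)
  (i : {linear M -> N}) (L : submod M) :
  normal_mono i -> saturated L ->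
  saturated_submodule (image_set i L) /\
  normal_epi (qproj L) /\
  normal_epi (qproj (image_submod i L)) /\
  exists i' : {linear quot L -> quot (image_submod i L)},
    (forall m : M, i' (qproj L m) = qproj (image_submod i L) (i m)) /\
    normal_mono i' /\
    is_pullback i (qproj L) (qproj (image_submod i L)) i' /\
    is_pushout i (qproj L) (qproj (image_submod i L)) i'.
Proof.
move=> [C [g ig]] satL.
split; first exact: image_saturated_submodule ig satL.
split; first exact: qproj_normal_epi.
split; first exact: qproj_normal_epi.
exists (qmap i L); split; first exact: qmapE.
split; first exact: qmap_normal_mono ig.
split; [exact: qmap_pullback ig | exact: qmap_pushout].
Qed.
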